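(* Let $(A,\Delta)$ be a graded connected coalgebra, $1_A$ the unique element of $A_0$ with $\varepsilon(1_A)=1$, and $\lambda:A\to\mathbb{K}$ a linear form with $\lambda(1_A)=1$. (1) There exists a unique coalgebra morphism $\psi:(A,\Delta)\to(\mathbb{K}[X],\Delta)$ such that $\varepsilon'\circ\psi=\lambda$. (2) If $(A,m,\Delta)$ is a bialgebra, then $\psi$ is a bialgebra morphism $(A,m,\Delta)\to(\mathbb{K}[X],m,\Delta)$ if and only if $\lambda$ is a character of $A$. (3) If $(A,m,\Delta,\delta)$ is a bialgebra in cointeraction, then $\psi$ is a morphism of bialgebras in cointeraction $(A,m,\Delta,\delta)\to(\mathbb{K}[X],m,\Delta,\delta)$ if and only if $\lambda$ is the counit $\varepsilon'$ of $(A,m,\delta)$.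
   Context: Work over a field $\mathbb{K}$ of characteristic zero. A graded connected coalgebra is a coalgebra $A=\bigoplus_{n\ge0}A_n$ with $\Delta(A_n)\subseteq\bigoplus_{i+j=n}A_i\otimes A_j$ and $A_0$ one-dimensional. On $\mathbb{K}[X]$: usual product $m$; coproducts $\Delta(X)=X\otimes1+1\otimes X$ and $\delta(X)=X\otimes X$, extended multiplicatively (so $\Delta(P)(X,Y)=P(X+Y)$, $\delta(P)(X,Y)=P(XY)$); counit of $\Delta$ is $P\mapsto P(0)$, counit of $\delta$ is $\varepsilon'(P)=P(1)$. A character of an algebra is an algebra morphism to $\mathbb{K}$. A bialgebra in cointeraction is $(A,m,\Delta,\delta)$ where $(A,m,\Delta)$ and $(A,m,\delta)$ are bialgebras and $(\Delta\otimes Id)\circ\delta=m_{1,3,24}\circ(\delta\otimes\delta)\circ\Delta$, with $m_{1,3,24}(a\otimes b\otimes c\otimes d)=a\otimes c\otimes bd$; a morphism of such is a linear map that is a bialgebra morphism for both structures. In (3), $A$ is as in the hypothesis (graded connected for $\Delta$). *)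

From HB Require Import structures.
From mathcomp Require Import all_boot all_order all_algebra.
Set Implicit Arguments. Unset Strict Implicit. Unset Printing Implicit Defensive.
Import GRing.Theory.
Local Open Scope ring_scope.

(* An element of V (x) W
   (V, W vector spaces over a field K) is represented by a finite formal sum
   s = [:: (x_1,y_1); ...; (x_k,y_k)] standing for  sum_i x_i (x) y_i.
   Two such representatives denote the same tensor iff they agree under
   every bilinear form V x W -> K (bilinear forms = (V (x) W)^*, which
   separate the points of V (x) W over a field).  Same for three factors. *)

Section Tensors.
Variable K : fieldType.

Definition linform (A : lmodType K) (f : A -> K) :=
  forall (c : K) (x y : A), f (c *: x + y) = c * f x + f y.

Definition linmap (A B : lmodType K) (f : A -> B) :=
  forall (c : K) (x y : A), f (c *: x + y) = c *: f x + f y.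

Definition bilinform (A B : lmodType K) (f : A -> B -> K) :=
  (forall y, linform (fun x => f x y)) /\ (forall x, linform (f x)).

Definition trilinform (A B C : lmodType K) (f : A -> B -> C -> K) :=
  [/\ forall y z, linform (fun x => f x y z),
      forall x z, linform (fun y => f x y z)
    & forall x y, linform (f x y)].

Definition teq2 (A B : lmodType K) (s t : seq (A * B)) :=
  forall f : A -> B -> K, bilinform f ->
    \sum_(p <- s) f p.1 p.2 = \sum_(p <- t) f p.1 p.2.

Definition teq3 (A B C : lmodType K) (s t : seq (A * B * C)) :=
  forall f : A -> B -> C -> K, trilinform f ->
    \sum_(p <- s) f p.1.1 p.1.2 p.2 = \sum_(p <- t) f p.1.1 p.1.2 p.2.

Section Coalg.
Variable A : lmodType K.
Variables (Delta : A -> seq (A * A)) (eps : A -> K).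

Definition coalgebra :=
  [/\
      forall c x y, teq2 (Delta (c *: x + y))
                         ([seq (c *: p.1, p.2) | p <- Delta x] ++ Delta y),
      linform eps,
      forall a, teq3 [seq (q.1, q.2, p.2) | p <- Delta a, q <- Delta p.1]
                     [seq (p.1, q.1, q.2) | p <- Delta a, q <- Delta p.2],
      forall a, \sum_(p <- Delta a) eps p.1 *: p.2 = a
    & forall a, \sum_(p <- Delta a) eps p.2 *: p.1 = a].

Definition graded_connected_coalgebra (gr : nat -> A -> Prop) :=
  coalgebra /\
  [/\
      forall n, gr n 0 /\ (forall c x y, gr n x -> gr n y -> gr n (c *: x + y)),
      forall a, exists (N : nat) (f : nat -> A),
         (forall i, gr i (f i)) /\ a = \sum_(i < N) f i,
      forall (N : nat) (f : nat -> A), (forall i, gr i (f i)) ->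
         \sum_(i < N) f i = 0 -> forall i, (i < N)%N -> f i = 0,
      forall n a, gr n a -> exists t : seq (A * A), teq2 (Delta a) t /\
         forall p, p \in t -> exists i j, (i + j = n)%N /\ gr i p.1 /\ gr j p.2
    &
      exists e, [/\ gr 0 e, e != 0 & forall x, gr 0 x -> exists c : K, x = c *: e]].

End Coalg.

Section Bialg.
Variable A : lmodType K.
Variables (m : A -> A -> A) (u : A).

Definition algebra_str :=
  [/\ forall x, linmap (m x), forall y, linmap (fun x => m x y),
      forall x y z, m x (m y z) = m (m x y) z,
      forall x, m u x = x & forall x, m x u = x].

Definition tmul (s t : seq (A * A)) :=
  [seq (m p.1 q.1, m p.2 q.2) | p <- s, q <- t].

Definition bialgebra (Delta : A -> seq (A * A)) (eps : A -> K) :=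
  [/\ algebra_str, coalgebra Delta eps,
      (forall a b, teq2 (Delta (m a b)) (tmul (Delta a) (Delta b))) /\
      teq2 (Delta u) [:: (u, u)],
      forall a b, eps (m a b) = eps a * eps b
    & eps u = 1].

Definition character (l : A -> K) :=
  [/\ linform l, forall a b, l (m a b) = l a * l b & l u = 1].

Definition cointeraction (Delta : A -> seq (A * A)) (eps : A -> K)
    (delta : A -> seq (A * A)) (epsd : A -> K) :=
  [/\ bialgebra Delta eps, bialgebra delta epsd
    & (* (Delta (x) Id) o delta = m_{1,3,24} o (delta (x) delta) o Delta *)
      forall a, teq3 [seq (q.1, q.2, p.2) | p <- delta a, q <- Delta p.1]
                     [seq (qr.1.1, qr.2.1, m qr.1.2 qr.2.2) |
                        p <- Delta a,
                        qr <- [seq (q, r) | q <- delta p.1, r <- delta p.2]]].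
End Bialg.

Section Morph.
Variables A B : lmodType K.
Variable f : A -> B.

Definition coalg_morph (DA : A -> seq (A * A)) (eA : A -> K)
                       (DB : B -> seq (B * B)) (eB : B -> K) :=
  [/\ linmap f,
      forall a, teq2 [seq (f p.1, f p.2) | p <- DA a] (DB (f a))
    & forall a, eB (f a) = eA a].

Definition alg_morph (mA : A -> A -> A) (uA : A) (mB : B -> B -> B) (uB : B) :=
  [/\ linmap f, forall a b, f (mA a b) = mB (f a) (f b) & f uA = uB].

Definition bialg_morph mA uA (DA : A -> seq (A * A)) (eA : A -> K)
                       mB uB (DB : B -> seq (B * B)) (eB : B -> K) :=
  alg_morph mA uA mB uB /\ coalg_morph DA eA DB eB.

Definition cointeraction_morph mA uA DA eA dA edA mB uB DB eB dB edB :=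
  bialg_morph mA uA DA eA mB uB DB eB /\ bialg_morph mA uA dA edA mB uB dB edB.
End Morph.

(* Delta(P)(X,Y) = P(X+Y) = sum_i p_i sum_{j<=i} C(i,j) X^j (x) X^(i-j) *)
Definition poly_Delta (P : {poly K}) : seq ({poly K} * {poly K}) :=
  [seq ((P`_i *+ 'C(i, j)) *: 'X^j, 'X^(i - j)) | i <- iota 0 (size P), j <- iota 0 i.+1].
Definition poly_eps (P : {poly K}) : K := P.[0].
(* delta(P)(X,Y) = P(XY) = sum_i p_i X^i (x) X^i *)
Definition poly_delta (P : {poly K}) : seq ({poly K} * {poly K}) :=
  [seq (P`_i *: 'X^i, 'X^i) | i <- iota 0 (size P)].
Definition poly_eps' (P : {poly K}) : K := P.[1].

End Tensors.

From mathcomp Require Import all_boot all_order all_algebra.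
From mathcomp Require Import ring.
From Stdlib Require Import IndefiniteDescription FunctionalExtensionality.
Import GRing.Theory.
Local Open Scope ring_scope.
Set Implicit Arguments. Unset Strict Implicit.

(* For a linear form l on a coalgebra, write l^k for its k-th convolution
   power (l^0 = eps).  Since Delta P = P(X + Y) on K[X], any coalgebra
   morphism psi with psi(a)(1) = lam(a) satisfies psi(a)(k) = lam^k(a) for
   all k : nat, and in characteristic zero a polynomial is determined by its
   values at the naturals; this gives uniqueness.  For existence, expand
   lam^k = (eps + (lam - eps))^k = sum_n C(k, n) (lam - eps)^n; connectedness
   makes lam - eps vanish on A_0, so (lam - eps)^n vanishes on A_d for n > d,
   and psi(a) = sum_n (lam - eps)^n(a) * binomial(X, n) is a polynomial.
   Multiplicativity of psi then amounts to that of every lam^k, which holds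
   for a character lam since Delta is multiplicative.  Finally, since
   delta P = P(XY), compatibility with delta amounts to
   (lam^k (x) lam^j) o delta = lam^(kj), which the cointeraction identity
   yields when lam is the counit of delta. *)

Section LinearForms.
Variable K : fieldType.

Lemma linform0 (A : lmodType K) (f : A -> K) : linform f -> f 0 = 0.
Proof.
move=> Hf; apply: (@addIr _ (f 0)).
by have := Hf 1 0 0; rewrite scale1r addr0 mul1r add0r.
Qed.

Lemma linformZ (A : lmodType K) (f : A -> K) c x : linform f -> f (c *: x) = c * f x.
Proof. by move=> Hf; have := Hf c x 0; rewrite addr0 linform0 // addr0. Qed.

Lemma linformD (A : lmodType K) (f : A -> K) x y : linform f -> f (x + y) = f x + f y.
Proof. by move=> Hf; have := Hf 1 x y; rewrite scale1r mul1r. Qed.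

Lemma linform_sum (A : lmodType K) (f : A -> K) I (r : seq I) (P : pred I) F :
  linform f -> f (\sum_(i <- r | P i) F i) = \sum_(i <- r | P i) f (F i).
Proof.
move=> Hf; apply: (big_morph f (id1 := 0) (op1 := +%R)); last exact: linform0.
by move=> x y; apply: linformD.
Qed.

Lemma linformB (A : lmodType K) (f g : A -> K) :
  linform f -> linform g -> linform (fun x => f x - g x).
Proof. by move=> Hf Hg c x y; rewrite Hf Hg; ring. Qed.

Lemma linform_horner (x : K) : linform (fun P : {poly K} => P.[x]).
Proof. by move=> c P Q; rewrite hornerD hornerZ. Qed.

Lemma bilinform_mul (A B : lmodType K) (f : A -> K) (g : B -> K) :
  linform f -> linform g -> bilinform (fun x y => f x * g y).
Proof.
move=> Hf Hg; split=> [y c x x' | x c y y'] /=.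
  by rewrite Hf mulrDl mulrA.
by rewrite Hg mulrDr mulrCA.
Qed.

Lemma trilinform_mul (A B C : lmodType K) (f : A -> K) (g : B -> K) (h : C -> K) :
  linform f -> linform g -> linform h -> trilinform (fun x y z => f x * g y * h z).
Proof.
move=> Hf Hg Hh; split=> [y z c x x' | x z c y y' | x y c z z'] /=.
- by rewrite Hf !mulrDl !mulrA.
- by rewrite Hg mulrDr mulrDl !mulrA (mulrC (f x) c).
- by rewrite Hh mulrDr mulrCA.
Qed.

Lemma teq2_sum_mul (A B : lmodType K) (f : A -> K) (g : B -> K) (s t : seq (A * B)) :
  linform f -> linform g -> teq2 s t ->
  \sum_(p <- s) f p.1 * g p.2 = \sum_(p <- t) f p.1 * g p.2.
Proof. by move=> Hf Hg /(_ _ (bilinform_mul Hf Hg)). Qed.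

End LinearForms.

Arguments linform0 {K A f}.
Arguments linformZ {K A f c x}.
Arguments linformD {K A f x y}.
Arguments linform_sum {K A f I r P F}.

Section PolynomialsAtNaturals.
Variable K : fieldType.
Hypothesis charK0 : [pchar K] =i pred0.

Lemma pchar0_natr_inj : injective (fun n : nat => n%:R : K).
Proof.
have natr_eq0 k : (k%:R == 0 :> K) = (k == 0)%N by move: k; apply/pcharf0P.
suff le_eq m n : (m <= n)%N -> m%:R = n%:R :> K -> m = n.
  move=> m n /= E; case: (leqP m n) => [|/ltnW] h; first exact: le_eq.
  by symmetry; apply: le_eq.
move=> le E; apply/eqP.
by rewrite eqn_leq le -subn_eq0 -natr_eq0 natrB // E subrr eqxx.
Qed.

(* Positive points suffice, and only they are available in the cointeraction
   part: see conv_pow_counit_delta. *)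
Lemma poly_posnat_ext (P Q : {poly K}) :
  (forall k, P.[k.+1%:R] = Q.[k.+1%:R]) -> P = Q.
Proof.
move=> PQ; apply/eqP; rewrite -subr_eq0; apply/eqP.
apply: (@roots_geq_poly_eq0 _ _ [seq k.+1%:R | k <- iota 0 (size (P - Q))]).
- by apply/allP => _ /mapP [k _ ->]; rewrite /root hornerD hornerN PQ subrr.
- by rewrite map_inj_uniq ?iota_uniq // => k l /pchar0_natr_inj [].
- by rewrite size_map size_iota.
Qed.

Lemma sumZ_poly_posnat_ext I (s t : seq I) (c : I -> K) (f : I -> {poly K}) :
  (forall k, \sum_(i <- s) c i * (f i).[k.+1%:R]
           = \sum_(i <- t) c i * (f i).[k.+1%:R]) ->
  \sum_(i <- s) c i *: f i = \sum_(i <- t) c i *: f i.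
Proof.
move=> st; apply: poly_posnat_ext => k; rewrite !horner_sum.
by under eq_bigr do rewrite hornerZ; under [RHS]eq_bigr do rewrite hornerZ.
Qed.

Lemma coef_sumZ I (s : seq I) (c : I -> K) (f : I -> {poly K}) j :
  (\sum_(i <- s) c i *: f i)`_j = \sum_(i <- s) c i * (f i)`_j.
Proof. by rewrite coef_sum; apply: eq_bigr => i _; rewrite coefZ. Qed.

Lemma poly_sum_wide (P : {poly K}) N :
  (size P <= N)%N -> P = \sum_(i < N) P`_i *: 'X^i.
Proof.
move=> sP; rewrite -poly_def; apply/polyP => j; rewrite coef_poly.
by case: ltnP => // /(leq_trans sP) /leq_sizeP ->.
Qed.

Lemma bilinform_poly_expand (F : {poly K} -> {poly K} -> K) N (P Q : {poly K}) :
  bilinform F -> (size P <= N)%N -> (size Q <= N)%N ->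
  F P Q = \sum_(i < N) \sum_(j < N) P`_i * Q`_j * F 'X^i 'X^j.
Proof.
move=> [FlinP FlinQ] sP sQ.
rewrite {1}(poly_sum_wide sP) (linform_sum (FlinP Q)); apply: eq_bigr => i _.
rewrite (linformZ (FlinP Q)) {1}(poly_sum_wide sQ) (linform_sum (FlinQ _)) mulr_sumr.
by apply: eq_bigr => j _; rewrite (linformZ (FlinQ _)) mulrA.
Qed.

Lemma teq2_coef (s t : seq ({poly K} * {poly K})) :
  (forall i j, \sum_(p <- s) p.1`_i * p.2`_j = \sum_(p <- t) p.1`_i * p.2`_j) ->
  teq2 s t.
Proof.
move=> st F HF.
set sz := fun p : {poly K} * {poly K} => maxn (size p.1) (size p.2).
set N := \max_(p <- s ++ t) sz p.
have expand r : {subset r <= s ++ t} -> \sum_(p <- r) F p.1 p.2 =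
    \sum_(i < N) \sum_(j < N) (\sum_(p <- r) p.1`_i * p.2`_j) * F 'X^i 'X^j.
  move=> sub_r; rewrite big_seq.
  under eq_bigr => p /sub_r p_st.
    have := leq_bigmax_seq (F := sz) _ p_st erefl.
    rewrite geq_max => /andP [s1 s2]; rewrite (bilinform_poly_expand HF s1 s2).
  over.
  rewrite -big_seq exchange_big; apply: eq_bigr => i _.
  by rewrite exchange_big; apply: eq_bigr => j _; rewrite mulr_suml.
rewrite !expand => [|p|p]; last 2 first.
- by rewrite mem_cat => ->; rewrite orbT.
- by rewrite mem_cat => ->.
by apply: eq_bigr => i _; apply: eq_bigr => j _; rewrite st.
Qed.

Lemma teq2_horner_posnat (s t : seq ({poly K} * {poly K})) :
  (forall k l, \sum_(p <- s) p.1.[k.+1%:R] * p.2.[l.+1%:R]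
             = \sum_(p <- t) p.1.[k.+1%:R] * p.2.[l.+1%:R]) -> teq2 s t.
Proof.
move=> st; apply: teq2_coef => i j.
have eval_snd l :
    \sum_(p <- s) p.2.[l.+1%:R] *: p.1 = \sum_(p <- t) p.2.[l.+1%:R] *: p.1.
  apply: sumZ_poly_posnat_ext => k.
  under eq_bigr do rewrite mulrC; under [RHS]eq_bigr do rewrite mulrC.
  exact: st.
have coef_fst : \sum_(p <- s) p.1`_i *: p.2 = \sum_(p <- t) p.1`_i *: p.2.
  apply: sumZ_poly_posnat_ext => l.
  have := congr1 (fun P : {poly K} => P`_i) (eval_snd l); rewrite /= !coef_sumZ.
  by under eq_bigr do rewrite mulrC; under [in X in _ = X -> _]eq_bigr do rewrite mulrC.
by have := congr1 (fun P : {poly K} => P`_j) coef_fst; rewrite /= !coef_sumZ.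
Qed.

Lemma poly_Delta_horner (P : {poly K}) x y :
  \sum_(p <- poly_Delta P) p.1.[x] * p.2.[y] = P.[x + y].
Proof.
rewrite /poly_Delta big_allpairs_dep /= (horner_coef_wide _ (leqnn _)).
rewrite -(big_mkord xpredT (fun i => P`_i * (x + y) ^+ i)) /index_iota subn0.
apply: eq_bigr => i _; rewrite addrC exprDn mulr_sumr.
rewrite -(big_mkord xpredT (fun j => P`_i * ((y ^+ (i - j) * x ^+ j) *+ 'C(i, j)))).
rewrite /index_iota subn0; apply: eq_bigr => j _ /=.
by rewrite hornerZ !hornerXn mulrnAl mulrnAr; ring.
Qed.

Lemma poly_delta_horner (P : {poly K}) x y :
  \sum_(p <- poly_delta P) p.1.[x] * p.2.[y] = P.[x * y].
Proof.
rewrite /poly_delta big_map (horner_coef_wide _ (leqnn _)).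
rewrite -(big_mkord xpredT (fun i => P`_i * (x * y) ^+ i)) /index_iota subn0.
by apply: eq_bigr => i _ /=; rewrite hornerZ !hornerXn exprMn mulrA.
Qed.

Fixpoint binom_poly (n : nat) : {poly K} :=
  if n is n'.+1 then n'.+1%:R^-1 *: (binom_poly n' * ('X - n'%:R%:P)) else 1.

Lemma binom_poly_nat n k : (binom_poly n).[k%:R] = 'C(k, n)%:R.
Proof.
elim: n => [|n IHn] /=; first by rewrite hornerC bin0.
rewrite hornerZ hornerM IHn hornerXsubC.
have Sn_neq0 : n.+1%:R != 0 :> K by move/pcharf0P: charK0 => ->.
have [le_nk | lt_kn] := leqP n k; last first.
  by rewrite !bin_small ?mul0r ?mulr0 // ltnS ltnW.
by rewrite -natrB // -natrM mulnC -mul_bin_left natrM mulrA mulVf // mul1r.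
Qed.

Lemma sum_binom_pascal (F : nat -> K) k :
  \sum_(n < k.+1) 'C(k, n)%:R * (F n.+1 + F n)
  = \sum_(n < k.+2) 'C(k.+1, n)%:R * F n.
Proof.
rewrite [RHS]big_ord_recl /=.
under [X in _ = _ + X]eq_bigr => i _ do rewrite /bump /= binS natrD mulrDl.
rewrite big_split /=; under eq_bigr => i _ do rewrite mulrDr.
rewrite big_split /= [X in _ = _ + X]addrC addrCA; congr (_ + _).
rewrite [in RHS]big_ord_recr /= (bin_small (ltnSn k)) mul0r addr0.
by rewrite big_ord_recl /= !bin0.
Qed.

Lemma big_ord_widen0 (F : nat -> K) n m : (n <= m)%N ->
  (forall i, (n <= i < m)%N -> F i = 0) ->
  \sum_(i < n) F i = \sum_(i < m) F i.
Proof.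
move=> le_nm F0; rewrite (big_ord_widen _ F le_nm) big_mkcond /=.
by apply: eq_bigr => i _; case: ltnP => // le_ni; rewrite F0 // le_ni ltn_ord.
Qed.

End PolynomialsAtNaturals.

Section Convolution.
Variable K : fieldType.
Variables (A : lmodType K) (Delta : A -> seq (A * A)) (eps : A -> K).
Hypothesis coalgA : coalgebra Delta eps.

Definition conv (f g : A -> K) a := \sum_(p <- Delta a) f p.1 * g p.2.

Fixpoint conv_pow (l : A -> K) n := if n is n'.+1 then conv (conv_pow l n') l else eps.

Definition sub_counit (l : A -> K) a := l a - eps a.

Lemma counit_linform : linform eps. Proof. by case: coalgA. Qed.

Lemma conv_linform (f g : A -> K) : linform f -> linform g -> linform (conv f g).
Proof.
move=> Hf Hg c x y; case: coalgA => Delta_lin _ _ _ _.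
rewrite /conv (teq2_sum_mul Hf Hg (Delta_lin c x y)) big_cat /= big_map mulr_sumr.
by congr (_ + _); apply: eq_bigr => p _; rewrite (linformZ Hf) mulrA.
Qed.

Lemma conv_pow_linform (l : A -> K) n : linform l -> linform (conv_pow l n).
Proof.
by move=> Hl; elim: n => [|n IHn] /=; [exact: counit_linform | exact: conv_linform].
Qed.

Lemma sub_counit_linform (l : A -> K) : linform l -> linform (sub_counit l).
Proof. by move=> Hl; apply: linformB => //; exact: counit_linform. Qed.

Lemma conv_counitr (f : A -> K) a : linform f -> conv f eps a = f a.
Proof.
case: coalgA => _ _ _ _ counitr Hf.
rewrite -{2}[a]counitr (linform_sum Hf) /conv.
by apply: eq_bigr => p _; rewrite (linformZ Hf) mulrC.
Qed.

Lemma conv_counitl (f : A -> K) a : linform f -> conv eps f a = f a.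
Proof.
case: coalgA => _ _ _ counitl _ Hf.
rewrite -{2}[a]counitl (linform_sum Hf) /conv.
by apply: eq_bigr => p _; rewrite (linformZ Hf).
Qed.

Lemma conv_pow1 (l : A -> K) a : linform l -> conv_pow l 1 a = l a.
Proof. exact: conv_counitl. Qed.

Lemma conv_powD (l : A -> K) k n a : linform l ->
  conv (conv_pow l k) (conv_pow l n) a = conv_pow l (k + n) a.
Proof.
move=> Hl; elim: n a => [|n IHn] a.
  by rewrite addn0 /= conv_counitr //; exact: conv_pow_linform.
case: coalgA => _ _ coassoc _ _.
have := coassoc a _ (trilinform_mul (conv_pow_linform k Hl) (conv_pow_linform n Hl) Hl).
rewrite !big_allpairs_dep /= addnS /= /conv => assoc_a.
transitivity (\sum_(p <- Delta a) \sum_(q <- Delta p.2)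
                conv_pow l k p.1 * conv_pow l n q.1 * l q.2).
  by apply: eq_bigr => p _; rewrite mulr_sumr; apply: eq_bigr => q _; rewrite mulrA.
by rewrite -assoc_a; apply: eq_bigr => p _; rewrite -IHn mulr_suml.
Qed.

Lemma conv_pow_binomial (l : A -> K) k a : linform l ->
  conv_pow l k a = \sum_(n < k.+1) 'C(k, n)%:R * conv_pow (sub_counit l) n a.
Proof.
move=> Hl; elim: k a => [|k IHk] a; first by rewrite big_ord1 bin0 mul1r.
rewrite -(sum_binom_pascal (fun n => conv_pow (sub_counit l) n a)) /= /conv.
under [LHS]eq_bigr => p _ do rewrite IHk mulr_suml.
rewrite exchange_big /=; apply: eq_bigr => n _.
under eq_bigr => p _ do rewrite -mulrA.
rewrite -mulr_sumr; congr (_ * _).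
rewrite -[X in _ = _ + X](conv_counitr _ (conv_pow_linform n (sub_counit_linform Hl))).
by rewrite /conv -big_split; apply: eq_bigr => p _; rewrite /= -mulrDr /sub_counit subrK.
Qed.

Lemma coalg_morph_horner_nat (l : A -> K) (psi : A -> {poly K}) :
  coalg_morph psi Delta eps (@poly_Delta K) (@poly_eps K) ->
  (forall a, poly_eps' (psi a) = l a) ->
  forall k a, (psi a).[k%:R] = conv_pow l k a.
Proof.
move=> [_ psi_Delta psi_eps] psi_l; elim=> [|k IHk] a; first exact: psi_eps.
have := psi_Delta a _ (bilinform_mul (linform_horner k%:R) (linform_horner 1)).
rewrite poly_Delta_horner big_map natr1 => <-.
by apply: eq_bigr => p _; rewrite IHk -psi_l.
Qed.

End Convolution.

Section GradedConnected.
Variable K : fieldType.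
Hypothesis charK0 : [pchar K] =i pred0.
Variables (A : lmodType K) (gr : nat -> A -> Prop)
  (Delta : A -> seq (A * A)) (eps : A -> K).
Hypothesis grA : graded_connected_coalgebra Delta eps gr.
Variable lam : A -> K.
Hypothesis lam_lin : linform lam.
Hypothesis lam_one : forall one : A, gr 0%N one -> eps one = 1 -> lam one = 1.

Let coalgA : coalgebra Delta eps. Proof. by case: grA. Qed.
Let eps_lin : linform eps. Proof. exact: counit_linform coalgA. Qed.
Let lam_eps_lin : linform (sub_counit eps lam).
Proof. exact: (sub_counit_linform coalgA lam_lin). Qed.

Lemma sub_counit_gr0 x : gr 0%N x -> sub_counit eps lam x = 0.
Proof.
case: grA => _ [gr_subspace _ _ gr_Delta [e [gr0e _ gr0_span]]].
suff lam_e : lam e = eps e.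
  move=> /gr0_span [c ->].
  by rewrite /sub_counit (linformZ lam_lin) (linformZ eps_lin) lam_e subrr.
have [eps_e0 | eps_e_neq0] := eqVneq (eps e) 0.
  (* lam_one does not apply when eps e = 0; then the counit axiom forces lam e = 0 *)
  rewrite eps_e0 -(conv_counitl coalgA e lam_lin).
  have [t [Delta_e t_gr]] := gr_Delta 0%N e gr0e.
  rewrite /conv (teq2_sum_mul eps_lin lam_lin Delta_e).
  apply: big1_seq => p /andP [_ /t_gr [i [j [/eqP]]]].
  rewrite addn_eq0 => /andP [/eqP -> _] [/gr0_span [c ->] _].
  by rewrite (linformZ eps_lin) eps_e0 mulr0 mul0r.
have gr0_normed : gr 0%N ((eps e)^-1 *: e).
  have [gr0_0 gr0_lin] := gr_subspace 0%N.
  by have := gr0_lin (eps e)^-1 e 0 gr0e gr0_0; rewrite addr0.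
have := lam_one gr0_normed.
rewrite (linformZ lam_lin) (linformZ eps_lin) mulVf // => /(_ erefl).
by move/(congr1 ( *%R (eps e))); rewrite mulrA mulfV // mul1r mulr1.
Qed.

Lemma conv_pow_sub_counit_gr d a n : gr d a -> (d < n)%N ->
  conv_pow Delta eps (sub_counit eps lam) n a = 0.
Proof.
elim/ltn_ind: d a n => d IHd a [|n] // gr_a lt_dn.
case: grA => _ [_ _ _ gr_Delta _].
have [t [Delta_a t_gr]] := gr_Delta d a gr_a.
rewrite /= /conv (teq2_sum_mul (conv_pow_linform coalgA n lam_eps_lin) lam_eps_lin Delta_a).
apply: big1_seq => p /andP [_ /t_gr [i [[|j] [ij [gr_i gr_j]]]]].
  by rewrite sub_counit_gr0 // mulr0.
have lt_id : (i < d)%N by rewrite -ij addnS ltnS leq_addr.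
by rewrite (IHd i lt_id p.1 n gr_i (leq_trans lt_id lt_dn)) mul0r.
Qed.

Lemma conv_pow_sub_counit_nilpotent a :
  exists N, forall n, (N <= n)%N -> conv_pow Delta eps (sub_counit eps lam) n a = 0.
Proof.
case: grA => _ [_ gr_sum _ _ _].
have [N [f [gr_f ->]]] := gr_sum a.
exists N => n le_Nn; rewrite (linform_sum (conv_pow_linform coalgA n lam_eps_lin)).
by apply: big1 => i _; apply: conv_pow_sub_counit_gr (gr_f i) _; exact: leq_trans le_Nn.
Qed.

Definition nil_index a : nat :=
  proj1_sig (constructive_indefinite_description _ (conv_pow_sub_counit_nilpotent a)).

Lemma nil_indexP a n : (nil_index a <= n)%N ->
  conv_pow Delta eps (sub_counit eps lam) n a = 0.
Proof. by rewrite /nil_index; case: constructive_indefinite_description => N; apply. Qed.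

Definition conv_pow_poly a : {poly K} :=
  \sum_(n < nil_index a) conv_pow Delta eps (sub_counit eps lam) n a *: binom_poly K n.

Lemma conv_pow_poly_nat k a : (conv_pow_poly a).[k%:R] = conv_pow Delta eps lam k a.
Proof.
set c := fun n => conv_pow Delta eps (sub_counit eps lam) n a.
rewrite horner_sum (conv_pow_binomial coalgA k a lam_lin).
under eq_bigr do rewrite hornerZ (binom_poly_nat charK0) -/(c _).
under [RHS]eq_bigr do rewrite mulrC -/(c _).
set N := (nil_index a + k.+1)%N; set F := fun n => c n * 'C(k, n)%:R.
rewrite (@big_ord_widen0 _ F _ N (leq_addr _ _)) => [|n /andP [le_n _]].
  rewrite [RHS](@big_ord_widen0 _ F _ N (leq_addl _ _)) // => n /andP [lt_kn _].
  by rewrite /F bin_small // mulr0.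
by rewrite /F /c nil_indexP // mul0r.
Qed.

Lemma conv_pow_poly_coalg_morph :
  coalg_morph conv_pow_poly Delta eps (@poly_Delta K) (@poly_eps K).
Proof.
split=> [c x y | a | a].
- apply: (poly_posnat_ext charK0) => k.
  by rewrite hornerD hornerZ !conv_pow_poly_nat (conv_pow_linform coalgA k.+1 lam_lin).
- apply: (teq2_horner_posnat charK0) => k l.
  rewrite big_map poly_Delta_horner -natrD conv_pow_poly_nat.
  rewrite -(conv_powD coalgA _ _ _ lam_lin).
  by apply: eq_bigr => p _; rewrite !conv_pow_poly_nat.
- by rewrite /poly_eps -(mulr0n 1) conv_pow_poly_nat.
Qed.

Lemma conv_pow_poly_eps' a : poly_eps' (conv_pow_poly a) = lam a.
Proof.
by rewrite /poly_eps' -(mulr1n 1) conv_pow_poly_nat (conv_pow1 coalgA _ lam_lin).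
Qed.

Lemma coalg_morph_poly_exists_unique :
  exists! psi : A -> {poly K},
    coalg_morph psi Delta eps (@poly_Delta K) (@poly_eps K) /\
    forall a, poly_eps' (psi a) = lam a.
Proof.
exists conv_pow_poly; split=> [|psi [psi_morph psi_lam]].
  by split; [exact: conv_pow_poly_coalg_morph | exact: conv_pow_poly_eps'].
apply: functional_extensionality => a; apply: (poly_posnat_ext charK0) => k.
by rewrite conv_pow_poly_nat (coalg_morph_horner_nat psi_morph psi_lam).
Qed.

End GradedConnected.

Section Bialgebra.
Variable K : fieldType.
Variables (A : lmodType K) (m : A -> A -> A) (u : A)
  (Delta : A -> seq (A * A)) (eps : A -> K).
Hypothesis charK0 : [pchar K] =i pred0.
Hypothesis bialgA : bialgebra m u Delta eps.

Let coalgA : coalgebra Delta eps. Proof. by case: bialgA. Qed.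

Lemma bialgebra_counit_character : character m u eps.
Proof. by case: bialgA => _ [_ eps_lin _ _ _] _ eps_mul eps_u. Qed.

Lemma conv_pow_mul (l : A -> K) : linform l -> (forall a b, l (m a b) = l a * l b) ->
  forall k a b,
  conv_pow Delta eps l k (m a b) = conv_pow Delta eps l k a * conv_pow Delta eps l k b.
Proof.
move=> l_lin l_mul; elim=> [|k IHk] a b; first by case: bialgA.
case: bialgA => _ _ [Delta_mul _] _ _.
rewrite /= /conv (teq2_sum_mul (conv_pow_linform coalgA k l_lin) l_lin (Delta_mul a b)).
rewrite /tmul big_allpairs_dep mulr_suml; apply: eq_bigr => p _.
by rewrite mulr_sumr; apply: eq_bigr => q _; rewrite IHk l_mul; ring.
Qed.

Lemma conv_pow_unit (l : A -> K) : linform l -> l u = 1 ->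
  forall k, conv_pow Delta eps l k u = 1.
Proof.
move=> l_lin l_u; elim=> [|k IHk]; first by case: bialgA.
case: bialgA => _ _ [_ Delta_u] _ _.
rewrite /= /conv (teq2_sum_mul (conv_pow_linform coalgA k l_lin) l_lin Delta_u).
by rewrite big_seq1 IHk l_u mulr1.
Qed.

Variable lam : A -> K.
Hypothesis lam_lin : linform lam.
Variable psi : A -> {poly K}.
Hypothesis psi_morph : coalg_morph psi Delta eps (@poly_Delta K) (@poly_eps K).
Hypothesis psi_lam : forall a, poly_eps' (psi a) = lam a.

Lemma character_alg_morph : character m u lam -> alg_morph psi m u *%R 1.
Proof.
move=> [_ lam_mul lam_u]; have psi_nat := coalg_morph_horner_nat psi_morph psi_lam.
split=> [|a b|]; first by case: psi_morph.
  by apply: (poly_posnat_ext charK0) => k; rewrite hornerM !psi_nat conv_pow_mul.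
by apply: (poly_posnat_ext charK0) => k; rewrite psi_nat hornerC conv_pow_unit.
Qed.

Lemma alg_morph_character : alg_morph psi m u *%R 1 -> character m u lam.
Proof.
move=> [_ psi_mul psi_u]; split=> [//|a b|].
  by rewrite -!psi_lam /poly_eps' psi_mul hornerM.
by rewrite -psi_lam /poly_eps' psi_u hornerC.
Qed.

Lemma bialg_morph_poly_iff_character :
  bialg_morph psi m u Delta eps *%R 1 (@poly_Delta K) (@poly_eps K)
  <-> character m u lam.
Proof.
split=> [[/alg_morph_character //] | lam_char].
by split=> //; exact: character_alg_morph.
Qed.

End Bialgebra.

Section Cointeraction.
Variable K : fieldType.
Hypothesis charK0 : [pchar K] =i pred0.
Variables (A : lmodType K) (m : A -> A -> A) (u : A)
  (Delta : A -> seq (A * A)) (eps : A -> K)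
  (delta : A -> seq (A * A)) (epsd : A -> K).
Hypothesis cointA : cointeraction m u Delta eps delta epsd.

Let bialgA : bialgebra m u Delta eps. Proof. by case: cointA. Qed.
Let bialgd : bialgebra m u delta epsd. Proof. by case: cointA. Qed.
Let coalgA : coalgebra Delta eps. Proof. by case: bialgA. Qed.
Let coalgd : coalgebra delta epsd. Proof. by case: bialgd. Qed.
Let epsd_char : character m u epsd. Proof. exact: bialgebra_counit_character bialgd. Qed.

(* k, j > 0 because conv_pow epsd 0 = eps, the counit of Delta, need not be
   compatible with delta. *)
Lemma conv_pow_counit_delta k j a :
  \sum_(p <- delta a)
     conv_pow Delta eps epsd k.+1 p.1 * conv_pow Delta eps epsd j.+1 p.2
  = conv_pow Delta eps epsd (k.+1 * j.+1) a.
Proof.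
have [epsd_lin epsd_mul _] := epsd_char.
set nu := conv_pow Delta eps epsd j.+1.
have nu_lin : linform nu by exact: (conv_pow_linform coalgA _ epsd_lin).
have nu_mul a1 b1 : nu (m a1 b1) = nu a1 * nu b1.
  exact: (conv_pow_mul bialgA epsd_lin epsd_mul).
have counitl_nu a1 : \sum_(p <- delta a1) epsd p.1 * nu p.2 = nu a1.
  exact: (conv_counitl coalgd a1 nu_lin).
elim: k a => [|k IHk] a.
  by rewrite mul1n -/nu -counitl_nu; apply: eq_bigr => p _; rewrite conv_pow1.
have pow_lin := conv_pow_linform coalgA k.+1 epsd_lin.
have [_ _ /(_ a _ (trilinform_mul pow_lin epsd_lin nu_lin)) coint_a] := cointA.
rewrite !big_allpairs_dep /= in coint_a.
transitivity (\sum_(p <- delta a) \sum_(q <- Delta p.1)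
                conv_pow Delta eps epsd k.+1 q.1 * epsd q.2 * nu p.2).
  by apply: eq_bigr => p _; rewrite /= /conv mulr_suml.
rewrite coint_a mulSn addnC -(conv_powD coalgA _ _ _ epsd_lin).
apply: eq_bigr => p _; rewrite -IHk -/nu -(counitl_nu p.2) mulr_suml big_allpairs.
apply: eq_bigr => q _; rewrite mulr_sumr; apply: eq_bigr => r _ /=.
by rewrite nu_mul; ring.
Qed.

Variable lam : A -> K.
Variable psi : A -> {poly K}.
Hypothesis psi_morph : coalg_morph psi Delta eps (@poly_Delta K) (@poly_eps K).
Hypothesis psi_lam : forall a, poly_eps' (psi a) = lam a.

Lemma cointeraction_morph_poly_iff_counit :
  cointeraction_morph psi m u Delta eps delta epsd
    *%R 1 (@poly_Delta K) (@poly_eps K) (@poly_delta K) (@poly_eps' K)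
  <-> forall a, lam a = epsd a.
Proof.
split=> [[_ [_ [_ _ psi_epsd]]] a | lam_epsd]; first by rewrite -psi_lam psi_epsd.
have lam_eq : lam = epsd by exact: functional_extensionality.
subst lam; have [epsd_lin _ _] := epsd_char.
have psi_nat := coalg_morph_horner_nat psi_morph psi_lam.
have psi_alg := character_alg_morph charK0 bialgA epsd_lin psi_morph psi_lam epsd_char.
split; split=> //; split=> [||a]; first by case: psi_morph.
- move=> a; apply: (teq2_horner_posnat charK0) => k j.
  rewrite big_map poly_delta_horner -natrM psi_nat -conv_pow_counit_delta.
  by apply: eq_bigr => p _; rewrite !psi_nat.
- by rewrite psi_lam.
Qed.

End Cointeraction.

Unset Implicit Arguments.
Theorem proposition64 (K : fieldType) (charK0 : [pchar K] =i pred0)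
  (A : lmodType K) (gr : nat -> A -> Prop)
  (Delta : A -> seq (A * A)) (eps : A -> K)
  (HA : graded_connected_coalgebra Delta eps gr)
  (lam : A -> K) (Hlam : linform lam)
  (Hlam1 : forall one : A, gr 0%N one -> eps one = 1 -> lam one = 1) :
  (* (1) *)
  (exists! psi : A -> {poly K},
      coalg_morph psi Delta eps (@poly_Delta K) (@poly_eps K) /\
      forall a, poly_eps' (psi a) = lam a)
  /\
  forall psi : A -> {poly K},
    coalg_morph psi Delta eps (@poly_Delta K) (@poly_eps K) ->
    (forall a, poly_eps' (psi a) = lam a) ->
    (* (2) *)
    (forall (m : A -> A -> A) (u : A), bialgebra m u Delta eps ->
       (bialg_morph psi m u Delta eps *%R 1 (@poly_Delta K) (@poly_eps K)
        <-> character m u lam))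
    /\
    (* (3) *)
    (forall (m : A -> A -> A) (u : A) (delta : A -> seq (A * A)) (epsd : A -> K),
       cointeraction m u Delta eps delta epsd ->
       (cointeraction_morph psi m u Delta eps delta epsd
          *%R 1 (@poly_Delta K) (@poly_eps K) (@poly_delta K) (@poly_eps' K)
        <-> forall a, lam a = epsd a)).
Proof.
split; first exact: (coalg_morph_poly_exists_unique charK0 HA Hlam Hlam1).
move=> psi psi_morph psi_lam; split=> [m u bialgA | m u delta epsd cointA].
  exact: (bialg_morph_poly_iff_character charK0 bialgA Hlam psi_morph psi_lam).
exact: (cointeraction_morph_poly_iff_counit charK0 cointA psi_morph psi_lam).
Qed.
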